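(* Let $F_2$ be the free group on generators $a,b$, and let $\mathcal A=\{a,b,\bar a,\bar b\}$, where $\bar a,\bar b$ denote $a^{-1},b^{-1}$. There exist a real number $\alpha>1$, an integer $n_0\in\mathbb N$, and, for every even $n\in\mathbb N$, a set $\mathcal W_n$ of words in the alphabet $\mathcal A$ such that for all even $n$: (1) every $w\in\mathcal W_n$ has length $n$ and represents the identity element of $F_2$; (2) if $n\geq n_0$ then $|\mathcal W_n|\geq \alpha^n$; (3) for every integer $t$ with $n/4\le t<n/2$, the initial subwords (prefixes) of length $t$ of distinct words in $\mathcal W_n$ represent distinct elements of $F_2$, i.e. the map $w\mapsto$ (element of $F_2$ represented by the length-$t$ prefix of $w$) is injective on $\mathcal W_n$.
   Context: A word in $\mathcal A$ is a finite sequence of letters from $\mathcal A$; it represents the element of $F_2$ obtained by multiplying the letters, with $\bar a=a^{-1}$ and $\bar b=b^{-1}$. A word is called trivial if it represents the identity of $F_2$. *)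

From HB Require Import structures.
From mathcomp Require Import all_boot.
From Stdlib Require Import Reals.

Set Implicit Arguments.
Unset Strict Implicit.
Unset Printing Implicit Defensive.

Inductive letter := La | Lb | Labar | Lbbar.

Definition letter_code (x : letter) : 'I_4 :=
  match x with La => inord 0 | Lb => inord 1 | Labar => inord 2 | Lbbar => inord 3 end.
Definition letter_decode (i : 'I_4) : letter :=
  match val i with 0 => La | 1 => Lb | 2 => Labar | _ => Lbbar end.
Lemma letter_codeK : cancel letter_code letter_decode.
Proof. by case; rewrite /letter_decode /= inordK. Qed.
HB.instance Definition _ := Equality.copy letter (can_type letter_codeK).

Definition inv_letter (x : letter) : letter :=
  match x with La => Labar | Labar => La | Lb => Lbbar | Lbbar => Lb end.

Definition word := seq letter.

(* Free reduction: the unique freely reduced word equivalent to w.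
   The free group F_2 is realised as the set of freely reduced words, and a
   word w represents the element [reduce w] of F_2. *)
Definition reduce (w : word) : word :=
  foldr (fun x acc => match acc with
                      | y :: acc' => if y == inv_letter x then acc' else x :: acc
                      | [::] => [:: x]
                      end) [::] w.

Definition same_elt (u v : word) : Prop := reduce u = reduce v.

Definition trivial_word (w : word) : Prop := reduce w = [::].

From mathcomp Require Import all_boot.
From Stdlib Require Import Reals Lra.
From mathcomp Require Import zify.

(* For v ranging over the 2^(n/4) positive words of length n/4, take the word
   u_v = v a^(n/2 - n/4) followed by its formal inverse.  Every such word is
   trivial, and a prefix of length t in [n/4, n/2) is a prefix of the positive
   word u_v, hence freely reduced and starting with v; so it determines v. *)

Definition word_inv (w : word) : word := map inv_letter (rev w).

Lemma inv_letterK : involutive inv_letter.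
Proof. by case. Qed.

Lemma word_inv_cons x w : word_inv (x :: w) = rcons (word_inv w) (inv_letter x).
Proof. by rewrite /word_inv rev_cons map_rcons. Qed.

Definition push_letter (x : letter) (r : word) : word :=
  match r with
  | y :: r' => if y == inv_letter x then r' else x :: r
  | [::] => [:: x]
  end.

Lemma reduce_cons x w : reduce (x :: w) = push_letter x (reduce w).
Proof. by []. Qed.

Definition reduced (w : word) : bool := sorted (fun x y => y != inv_letter x) w.

Lemma reduced_push x r : reduced r -> reduced (push_letter x r).
Proof.
case: r => [|y r] //= red_yr.
case: eqP => [_ | /eqP ne_yx]; last by rewrite /reduced /= ne_yx red_yr.
by case: r red_yr => //= z r /andP [].
Qed.

Lemma reduced_reduce w : reduced (reduce w).
Proof. by elim: w => [|x w IH] //; rewrite reduce_cons; apply: reduced_push. Qed.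

Lemma reduce_id w : reduced w -> reduce w = w.
Proof.
elim: w => [|x w IH] // red_xw; rewrite reduce_cons IH; last first.
  by case: w red_xw {IH} => //= y w /andP [].
by case: w red_xw {IH} => //= y w /andP [/negbTE ->].
Qed.

Lemma push_letter_inv x r :
  reduced r -> push_letter x (push_letter (inv_letter x) r) = r.
Proof.
case: r => [|y r] /=; first by rewrite eqxx.
rewrite inv_letterK; have [-> | ne_yx] := eqVneq y x; last by rewrite /= eqxx.
by case: r => [|z r] //= /andP [/negbTE ->].
Qed.

Lemma reduce_cat_inv u v : reduce (u ++ word_inv u ++ v) = reduce v.
Proof.
elim: u v => [|x u IH] v //.
rewrite word_inv_cons -cats1 -catA cat_cons !reduce_cons IH.
exact/push_letter_inv/reduced_reduce.
Qed.

Lemma trivial_cat_inv u : trivial_word (u ++ word_inv u).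
Proof. by have := reduce_cat_inv u [::]; rewrite cats0. Qed.

Definition positive (x : letter) : bool := if x is (La | Lb) then true else false.

Lemma positive_reduced w : all positive w -> reduced w.
Proof.
rewrite /reduced; elim: w => [|x w IH] //= /andP [pos_x pos_w].
have := IH pos_w; case: w pos_w {IH} => [|y w] //= /andP [pos_y _] ->.
by rewrite andbT; case: x pos_x; case: y pos_y => // _ _; apply/eqP.
Qed.

Fixpoint positive_words (k : nat) : seq word :=
  if k is k'.+1 then [seq La :: v | v <- positive_words k'] ++
                     [seq Lb :: v | v <- positive_words k']
  else [:: [::]].

Lemma size_positive_words k : size (positive_words k) = 2 ^ k.
Proof. by elim: k => //= k IH; rewrite size_cat !size_map IH; lia. Qed.

Lemma positive_words_uniq k : uniq (positive_words k).
Proof.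
elim: k => //= k IH; rewrite cat_uniq !map_inj_uniq ?IH //=; try by move=> ? ? [].
by rewrite andbT; apply/hasPn => _ /mapP [v _ ->]; apply/mapP => [[]].
Qed.

Lemma mem_positive_words k v :
  v \in positive_words k -> size v = k /\ all positive v.
Proof.
elim: k v => [|k IH] v /=; first by rewrite inE => /eqP ->.
by rewrite mem_cat => /orP [] /mapP [u /IH [size_u pos_u] ->] /=; rewrite size_u pos_u.
Qed.

Definition pad (m : nat) (v : word) : word := v ++ nseq (m - size v) La.

Definition witness (m : nat) (v : word) : word := pad m v ++ word_inv (pad m v).

Lemma size_witness m v : size v <= m -> size (witness m v) = m + m.
Proof.
by move=> le_vm; rewrite size_cat size_map size_rev size_cat size_nseq subnKC.
Qed.

Lemma take_witness_prefix m v t :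
  size v <= t -> take (size v) (take t (witness m v)) = v.
Proof. by move=> le_vt; rewrite take_takel // /witness /pad -catA take_size_cat. Qed.

Lemma reduced_take_witness m v t :
  all positive v -> size v <= m -> t <= m -> reduced (take t (witness m v)).
Proof.
move=> pos_v le_vm le_tm; rewrite takel_cat; last by rewrite size_cat size_nseq subnKC.
apply/positive_reduced/allP => x /mem_take; apply/allP.
by rewrite all_cat pos_v all_nseq orbT.
Qed.

Definition witness_words (n : nat) : seq word :=
  map (witness (n %/ 2)) (positive_words (n %/ 4)).

Lemma pow_le_pow2_quarter (n : nat) : 8 <= n ->
  ((17/16) ^ n <= INR (2 ^ (n %/ 4)))%R.
Proof.
move=> le8n; set q := n %/ 8.
apply: (@Rle_trans _ ((17/16) ^ (8 * q.+1))).
  by apply: Rle_pow; [lra | apply/leP; rewrite /q; lia].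
rewrite pow_mult pow_INR; apply: (@Rle_trans _ (INR 2 ^ q.+1)).
  by apply: pow_incr; split; [apply: pow_le | rewrite /=]; lra.
by apply: Rle_pow; [rewrite /=; lra | apply/leP; rewrite /q; lia].
Qed.

Theorem lemma2 :
  exists (alpha : R) (n0 : nat) (W : nat -> seq word),
    (1 < alpha)%R /\
    forall n : nat, ~~ odd n ->
      uniq (W n) /\
      (forall w, w \in W n -> size w = n /\ trivial_word w) /\
      ((n0 <= n)%N -> (alpha ^ n <= INR (size (W n)))%R) /\
      (forall t : nat, (n <= 4 * t)%N -> (2 * t < n)%N ->
         forall w1 w2, w1 \in W n -> w2 \in W n ->
           same_elt (take t w1) (take t w2) -> w1 = w2).
Proof.
exists (17/16)%R, 8, witness_words; split; first lra.
move=> n even_n; set h := n %/ 2; set k := n %/ 4.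
have n_eq : n = h + h by rewrite /h; move: even_n; rewrite -dvdn2; lia.
have le_kh : k <= h by rewrite /k /h; lia.
have prefix_inj t v1 v2 : v1 \in positive_words k -> v2 \in positive_words k ->
    k <= t -> take t (witness h v1) = take t (witness h v2) -> v1 = v2.
  move=> /mem_positive_words [size_v1 _] /mem_positive_words [size_v2 _] le_kt eq12.
  rewrite -(take_witness_prefix h v1 t) ?size_v1 // eq12.
  by rewrite -size_v2 take_witness_prefix ?size_v2.
split.
  rewrite map_inj_in_uniq ?positive_words_uniq // => v1 v2 in1 in2.
  by move/(congr1 (take k)); apply: prefix_inj.
split.
  move=> _ /mapP [v /mem_positive_words [size_v _] ->].
  by rewrite size_witness ?size_v // -n_eq; split; last exact: trivial_cat_inv.
split.
  by move=> le8n; rewrite size_map size_positive_words; apply: pow_le_pow2_quarter.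
move=> t le_n_4t lt_2t_n _ _ /mapP [v1 in1 ->] /mapP [v2 in2 ->].
have [size_v1 pos_v1] := mem_positive_words _ _ in1.
have [size_v2 pos_v2] := mem_positive_words _ _ in2.
have le_th : t <= h by lia.
rewrite /same_elt !reduce_id ?reduced_take_witness ?size_v1 ?size_v2 // => eq12.
by rewrite (prefix_inj t v1 v2) // /k; lia.
Qed.
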